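(* Assume inhibitory coupling ($\varepsilon_{ij}\le0$ for all $i,j$ and $\varepsilon<0$). Let $\boldsymbol\delta\in\mathbb R^N$ with $\delta_i\ge0$ for all $i$, and suppose $\boldsymbol\delta$ is not a multiple of $(1,\dots,1)^{\mathsf T}$. Put - $\delta_M=\max_i\delta_i$; - $\delta_m=\max\{\delta_i:\delta_i<\delta_M\}$; - $\mathbb M=\{j:\delta_j=\delta_M\}$. Then for every ordering $\mathcal O$ and every $i$, $$(A(\mathcal O)\boldsymbol\delta)_i\le\delta_M-(\delta_M-\delta_m)\sum_{j\notin\mathbb M}A_{ij}(\mathcal O),$$ and $A(\mathcal O)\boldsymbol\delta$ has nonnegative components. In particular: - if there is no $i$ with $\mathrm{Pre}(i)\cup\{i\}\subseteq\mathbb M$, then $\max_i(A(\mathcal O)\boldsymbol\delta)_i<\delta_M$; - if such an $i$ exists, then $\max_i(A(\mathcal O)\boldsymbol\delta)_i=\delta_M$.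
   Context: Let $U$ be a twice continuously differentiable, strictly increasing function on an interval $I\subseteq\mathbb R$ containing $(-\infty,1]$. Assume $U'>0$ and $U''<0$ on $I$, $U(0)=0$ and $U(1)=1$. Fix $N\ge 2$ and a delay $\tau\in(0,1)$. For each $i$ fix a nonempty set $\mathrm{Pre}(i)\subseteq\{1,\dots,N\}\setminus\{i\}$ and put $k_i=|\mathrm{Pre}(i)|$. Fix real couplings $\varepsilon_{ij}$ with $\varepsilon_{ij}\neq0$ if and only if $j\in\mathrm{Pre}(i)$, normalized so that $\sum_j\varepsilon_{ij}=\varepsilon$ for every $i$. An ordering $\mathcal O$ is a choice, for each $i$, of an enumeration $j_1(i),\dots,j_{k_i}(i)$ of $\mathrm{Pre}(i)$. For $n\in\{0,\dots,k_i\}$ define $$p_{i,n}=\frac{U'\Big(U^{-1}\big(U(\tau)+\sum_{m=1}^{n}\varepsilon_{ij_m(i)}\big)\Big)}{U'\big(U^{-1}(U(\tau)+\varepsilon)\big)}.$$ The stability matrix $A(\mathcal O)$ has entries - $A_{ii}=p_{i,0}$; - $A_{ij}=p_{i,n}-p_{i,n-1}$ if $j=j_n(i)$; - $A_{ij}=0$ if $j\notin\mathrm{Pre}(i)\cup\{i\}$. *)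

From Stdlib Require Import Reals List ClassicalEpsilon.
Open Scope R_scope.

Fixpoint sumN (n : nat) (f : nat -> R) : R :=
  match n with O => 0 | S k => sumN k f + f k end.

(* derivative of f at x relative to the set D (one-sided at endpoints) *)
Definition deriv_within (D : R -> Prop) (f : R -> R) (x l : R) : Prop :=
  forall e, 0 < e -> exists d, 0 < d /\
    forall h, h <> 0 -> Rabs h < d -> D (x + h) ->
      Rabs ((f (x + h) - f x) / h - l) < e.

Definition cont_within (D : R -> Prop) (f : R -> R) (x : R) : Prop :=
  forall e, 0 < e -> exists d, 0 < d /\
    forall y, D y -> Rabs (y - x) < d -> Rabs (f y - f x) < e.

Definition is_interval (I : R -> Prop) : Prop :=
  forall x y z, I x -> I z -> x <= y -> y <= z -> I y.

(* U^{-1}(y): the point x of I with U x = y (chosen by epsilon; unique when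
   U is strictly increasing on I and y is in the range). *)
Definition Uinv (I : R -> Prop) (U : R -> R) (y : R) : R :=
  epsilon (inhabits 0) (fun x => I x /\ U x = y).

(* sum of the first n couplings along the enumeration l of Pre(i) *)
Definition partial_eps (eps : nat -> nat -> R) (i : nat) (l : list nat) (n : nat) : R :=
  fold_right (fun j acc => eps i j + acc) 0 (firstn n l).

(* p_{i,n} for the ordering o (o i = enumeration j_1(i),...,j_{k_i}(i)) *)
Definition p_coef (I : R -> Prop) (U dU : R -> R) (tau epsT : R)
  (eps : nat -> nat -> R) (o : nat -> list nat) (i n : nat) : R :=
  dU (Uinv I U (U tau + partial_eps eps i (o i) n))
  / dU (Uinv I U (U tau + epsT)).

(* 0-based position of j in l *)
Fixpoint pos (j : nat) (l : list nat) : nat :=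
  match l with
  | nil => O
  | x :: l' => if Nat.eq_dec x j then O else S (pos j l')
  end.

Definition Amat (I : R -> Prop) (U dU : R -> R) (tau epsT : R)
  (eps : nat -> nat -> R) (o : nat -> list nat) (i j : nat) : R :=
  let p := p_coef I U dU tau epsT eps o i in
  if Nat.eq_dec j i then p O
  else if in_dec Nat.eq_dec j (o i) then
    p (S (pos j (o i))) - p (pos j (o i))
  else 0.

Definition Amul (N : nat) (A : nat -> nat -> R) (delta : nat -> R) (i : nat) : R :=
  sumN N (fun j => A i j * delta j).

Definition is_max_on (P : nat -> Prop) (f : nat -> R) (m : R) : Prop :=
  (exists i, P i /\ f i = m) /\ (forall i, P i -> f i <= m).

Definition is_ordering (N : nat) (Pre : nat -> nat -> Prop) (o : nat -> list nat) : Prop :=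
  forall i, (i < N)%nat -> NoDup (o i) /\ (forall j, In j (o i) <-> Pre i j).

From Pilot Require Import Defs.
From Stdlib Require Import Reals List Lra Lia ClassicalEpsilon Classical.
Open Scope R_scope.

(* The argument has two independent halves.
   - Each row of the stability matrix A(O) is stochastic: its entries are
     nonnegative, sum to 1, and are positive exactly on Pre(i) ∪ {i}.
     Row i telescopes the coefficients p_{i,0} < p_{i,1} < ... < p_{i,k_i} = 1:
     the partial coupling sums decrease along the enumeration (all couplings
     are negative), U^{-1} is increasing and U' is decreasing (U'' < 0), so
     the quotients p_{i,n} increase, and the last one is 1 by normalization.
   - For a stochastic row a and a vector δ with maximum δ_M and second value
     δ_m, the average Σ a_j δ_j is at most δ_M - (δ_M - δ_m) Σ_{j∉M} a_j; it is
     < δ_M when some weight sits outside M, and = δ_M when all weight is in M.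
   The theorem combines the two: the support of row i is Pre(i) ∪ {i}. *)

Lemma sumN_ext n f g :
  (forall j, (j < n)%nat -> f j = g j) -> sumN n f = sumN n g.
Proof.
  induction n as [|n IH]; simpl; intros H; auto.
  rewrite IH by (intros; apply H; lia). rewrite H by lia. reflexivity.
Qed.

Lemma sumN_plus n f g : sumN n (fun j => f j + g j) = sumN n f + sumN n g.
Proof. induction n; simpl; [ring | rewrite IHn; ring]. Qed.

Lemma sumN_minus n f g : sumN n (fun j => f j - g j) = sumN n f - sumN n g.
Proof. induction n; simpl; [ring | rewrite IHn; ring]. Qed.

Lemma sumN_scal n c f : sumN n (fun j => c * f j) = c * sumN n f.
Proof. induction n; simpl; [ring | rewrite IHn; ring]. Qed.

Lemma sumN_zero n : sumN n (fun _ => 0) = 0.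
Proof. induction n; simpl; [ring | rewrite IHn; ring]. Qed.

Lemma sumN_le n f g :
  (forall j, (j < n)%nat -> f j <= g j) -> sumN n f <= sumN n g.
Proof.
  induction n as [|n IH]; simpl; intros H; [lra|].
  assert (sumN n f <= sumN n g) by (apply IH; intros; apply H; lia).
  assert (f n <= g n) by (apply H; lia). lra.
Qed.

Lemma sumN_nonneg n f : (forall j, (j < n)%nat -> 0 <= f j) -> 0 <= sumN n f.
Proof. intros H. rewrite <- (sumN_zero n). apply sumN_le; auto. Qed.

Lemma sumN_ge_term n f a :
  (forall j, (j < n)%nat -> 0 <= f j) -> (a < n)%nat -> f a <= sumN n f.
Proof.
  induction n as [|n IH]; intros H Ha; [lia|]. simpl.
  assert (0 <= f n) by (apply H; lia).
  destruct (Nat.eq_dec a n) as [->|Hne].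
  - assert (0 <= sumN n f) by (apply sumN_nonneg; intros; apply H; lia). lra.
  - assert (f a <= sumN n f) by (apply IH; [intros; apply H; lia | lia]). lra.
Qed.

Lemma sumN_single n a g :
  (a < n)%nat -> sumN n (fun j => if Nat.eq_dec j a then g j else 0) = g a.
Proof.
  induction n as [|n IH]; intros Ha; [lia|]. simpl.
  destruct (Nat.eq_dec n a) as [->|Hne].
  - rewrite (sumN_ext _ _ (fun _ => 0)), sumN_zero; [ring|].
    intros j Hj. destruct (Nat.eq_dec j a); [lia | reflexivity].
  - rewrite IH by lia. ring.
Qed.

Lemma sumN_shift n h : sumN (S n) h = h 0%nat + sumN n (fun k => h (S k)).
Proof.
  induction n as [|n IH]; [simpl; ring|].
  change (sumN (S (S n)) h) with (sumN (S n) h + h (S n)). rewrite IH. simpl. ring.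
Qed.

Lemma sumN_telescope n p : sumN n (fun k => p (S k) - p k) = p n - p 0%nat.
Proof. induction n; simpl; [ring | rewrite IHn; ring]. Qed.

Definition listsum (g : nat -> R) (l : list nat) : R :=
  fold_right (fun j acc => g j + acc) 0 l.

Lemma listsum_ext g g' l :
  (forall j, In j l -> g j = g' j) -> listsum g l = listsum g' l.
Proof.
  induction l as [|a l IH]; simpl; intros H; auto.
  rewrite H, IH by auto. reflexivity.
Qed.

Lemma sumN_indicator_list N g l :
  NoDup l -> (forall j, In j l -> (j < N)%nat) ->
  sumN N (fun j => if in_dec Nat.eq_dec j l then g j else 0) = listsum g l.
Proof.
  induction l as [|a l IH]; intros Hnd Hlt.
  - simpl. apply sumN_zero.
  - change (listsum g (a :: l)) with (g a + listsum g l).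
    inversion Hnd as [|? ? Ha Hnd']; subst.
    rewrite (sumN_ext _ _ (fun j => (if Nat.eq_dec j a then g j else 0)
                           + (if in_dec Nat.eq_dec j l then g j else 0))).
    + rewrite sumN_plus, sumN_single, IH by (auto || (intros; apply Hlt; simpl; auto)).
      reflexivity.
    + intros j _. destruct (Nat.eq_dec j a) as [->|Hja].
      * destruct (in_dec Nat.eq_dec a (a :: l)) as [_|Hn]; [|simpl in Hn; tauto].
        destruct (in_dec Nat.eq_dec a l); [tauto | ring].
      * destruct (in_dec Nat.eq_dec j (a :: l)) as [Hin|Hin];
          destruct (in_dec Nat.eq_dec j l); simpl in Hin; try ring.
        -- destruct Hin; [congruence | tauto].
        -- tauto.
Qed.

Lemma pos_lt j l : In j l -> (Defs.pos j l < length l)%nat.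
Proof.
  induction l as [|a l IH]; simpl; intros H; [tauto|].
  destruct (Nat.eq_dec a j); [lia|].
  destruct H; [tauto|]. specialize (IH H). lia.
Qed.

Lemma listsum_pos l h :
  NoDup l -> listsum (fun j => h (Defs.pos j l)) l = sumN (length l) h.
Proof.
  revert h. induction l as [|a l IH]; intros h Hnd; simpl; auto.
  inversion Hnd as [|? ? Ha Hnd']; subst.
  destruct (Nat.eq_dec a a) as [_|]; [|tauto].
  rewrite (listsum_ext _ (fun j => (fun k => h (S k)) (Defs.pos j l))).
  - change (sumN (length l) h + h (length l)) with (sumN (S (length l)) h).
    rewrite sumN_shift, (IH (fun k => h (S k)) Hnd'). reflexivity.
  - intros j Hj. destruct (Nat.eq_dec a j); [subst; tauto | reflexivity].
Qed.

Lemma partial_eps_S eps i l n :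
  (n < length l)%nat ->
  partial_eps eps i l (S n) = partial_eps eps i l n + eps i (nth n l 0%nat).
Proof.
  unfold partial_eps. revert n.
  induction l as [|a l IH]; intros n Hn; simpl in Hn; [lia|].
  destruct n as [|n]; [simpl; ring|].
  change (firstn (S (S n)) (a :: l)) with (a :: firstn (S n) l).
  change (firstn (S n) (a :: l)) with (a :: firstn n l).
  cbn [fold_right nth]. rewrite IH by lia. ring.
Qed.

Lemma partial_eps_nonpos eps i l n :
  (forall j, In j l -> eps i j <= 0) -> partial_eps eps i l n <= 0.
Proof.
  unfold partial_eps. revert n.
  induction l as [|a l IH]; intros n H; destruct n; simpl; try lra.
  assert (eps i a <= 0) by (apply H; simpl; auto).
  assert (fold_right (fun j acc => eps i j + acc) 0 (firstn n l) <= 0)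
    by (apply IH; intros; apply H; simpl; auto).
  lra.
Qed.

(* Given an enumeration [l] of the predecessors of [i] and coefficients
   [p 0 < p 1 < ... < p |l| = 1], the row puts [p 0] on the diagonal and the
   increment [p (n+1) - p n] on the n-th predecessor; this is the shape of
   the rows of [Amat]. *)

Definition ordered_row (i : nat) (l : list nat) (p : nat -> R) (j : nat) : R :=
  if Nat.eq_dec j i then p O
  else if in_dec Nat.eq_dec j l then p (S (Defs.pos j l)) - p (Defs.pos j l)
  else 0.

Definition stochastic_row (N : nat) (r : nat -> R) : Prop :=
  (forall j, (j < N)%nat -> 0 <= r j) /\ sumN N r = 1.

Section OrderedRow.

Variables (N i : nat) (l : list nat) (p : nat -> R).
Hypothesis Hi : (i < N)%nat.
Hypothesis Hnd : NoDup l.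
Hypothesis Hl : forall j, In j l -> (j < N)%nat /\ j <> i.
Hypothesis Hp0 : 0 < p O.
Hypothesis Hp_incr : forall n, (n < length l)%nat -> p n < p (S n).
Hypothesis Hp_last : p (length l) = 1.

Lemma ordered_row_pos j : 0 < ordered_row i l p j <-> j = i \/ In j l.
Proof.
  unfold ordered_row. destruct (Nat.eq_dec j i) as [->|Hne]; [tauto|].
  destruct (in_dec Nat.eq_dec j l) as [Hj|Hj].
  - pose proof (Hp_incr _ (pos_lt _ _ Hj)). split; [tauto | lra].
  - split; [lra | tauto].
Qed.

Lemma ordered_row_nonneg j : 0 <= ordered_row i l p j.
Proof.
  destruct (Rlt_or_le 0 (ordered_row i l p j)) as [|Hle]; [lra|].
  unfold ordered_row in *. destruct (Nat.eq_dec j i); [lra|].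
  destruct (in_dec Nat.eq_dec j l) as [Hj|]; [|lra].
  pose proof (Hp_incr _ (pos_lt _ _ Hj)). lra.
Qed.

(* The increments telescope to [p |l| - p 0], which together with the
   diagonal entry gives [p |l| = 1]. *)
Lemma ordered_row_sum : sumN N (ordered_row i l p) = 1.
Proof.
  assert (Hi_notin : ~ In i l) by (intros H; destruct (Hl i H); tauto).
  rewrite (sumN_ext _ _ (fun j => (if Nat.eq_dec j i then p O else 0) +
     (if in_dec Nat.eq_dec j l
      then (fun j => (fun k => p (S k) - p k) (Defs.pos j l)) j else 0))).
  - rewrite sumN_plus, (sumN_single N i (fun _ => p O)) by exact Hi.
    rewrite sumN_indicator_list by (auto || (intros j Hj; apply Hl, Hj)).
    rewrite (listsum_pos l (fun k => p (S k) - p k)), sumN_telescope by exact Hnd.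
    lra.
  - intros j _. unfold ordered_row.
    destruct (Nat.eq_dec j i) as [->|]; [|destruct (in_dec Nat.eq_dec j l); ring].
    destruct (in_dec Nat.eq_dec i l); [tauto | ring].
Qed.

Lemma ordered_row_stochastic : stochastic_row N (ordered_row i l p).
Proof. split; [intros; apply ordered_row_nonneg | apply ordered_row_sum]. Qed.

End OrderedRow.

Section ConcaveUtility.

Variables (I : R -> Prop) (U dU d2U : R -> R).
Hypothesis HI1 : forall x, x <= 1 -> I x.
Hypothesis HdU : forall x, I x -> deriv_within I U x (dU x).
Hypothesis Hd2U : forall x, I x -> deriv_within I dU x (d2U x).
Hypothesis Hinc : forall x y, I x -> I y -> x < y -> U x < U y.
Hypothesis HdUpos : forall x, I x -> 0 < dU x.
Hypothesis Hd2Uneg : forall x, I x -> d2U x < 0.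
Hypothesis HU0 : U 0 = 0.

(* Below 1 the point is interior to I, so a derivative within I is an
   ordinary two-sided derivative. *)
Lemma derivable_below_one f f' c :
  deriv_within I f c f' -> c < 1 -> derivable_pt_lim f c f'.
Proof.
  intros H Hc e He. destruct (H e He) as [d [Hd Hh]].
  assert (Hp : 0 < Rmin d (1 - c)) by (apply Rmin_pos; lra).
  exists (mkposreal _ Hp). intros h Hh0 Hhl. simpl in Hhl.
  assert (Rabs h < d) by (eapply Rlt_le_trans; [exact Hhl | apply Rmin_l]).
  assert (Rabs h < 1 - c) by (eapply Rlt_le_trans; [exact Hhl | apply Rmin_r]).
  pose proof (RRle_abs h). apply Hh; auto. apply HI1. lra.
Qed.

Lemma U_continuous x : x < 1 -> continuity_pt U x.
Proof.
  intros Hx. apply derivable_continuous_pt. exists (dU x).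
  apply derivable_below_one; [apply HdU, HI1; lra | exact Hx].
Qed.

Lemma dU_decreasing a b : a < b -> b < 1 -> dU b < dU a.
Proof.
  intros Hab Hb.
  destruct (MVT_cor2 dU d2U a b Hab) as [c [Hc1 Hc2]].
  { intros c Hc. apply derivable_below_one; [apply Hd2U, HI1 | ]; lra. }
  assert (d2U c < 0) by (apply Hd2Uneg, HI1; lra). nra.
Qed.

Lemma U_below_tangent x : x < 0 -> U x <= dU 0 * x.
Proof.
  intros Hx.
  destruct (MVT_cor2 U dU x 0 Hx) as [c [Hc1 Hc2]].
  { intros c Hc. apply derivable_below_one; [apply HdU, HI1 | ]; lra. }
  assert (dU 0 < dU c) by (apply dU_decreasing; lra). nra.
Qed.

(* Every value below U b (b < 1) is attained at some point left of b:
   U tends to -oo by the tangent bound, and U is continuous. *)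
Lemma U_attains b y : b < 1 -> y <= U b -> exists x, x <= b /\ U x = y.
Proof.
  intros Hb Hy. destruct (Req_dec y (U b)) as [->|Hne]; [exists b; split; lra|].
  assert (Hc : 0 < dU 0) by (apply HdUpos, HI1; lra).
  set (x0 := Rmin (b - 1) (- Rabs y / dU 0 - 1)).
  assert (Hx0b : x0 <= b - 1) by apply Rmin_l.
  assert (Hx0y : x0 <= - Rabs y / dU 0 - 1) by apply Rmin_r.
  assert (Hq : 0 <= Rabs y / dU 0)
    by (unfold Rdiv; apply Rmult_le_pos; [apply Rabs_pos | left; apply Rinv_0_lt_compat; lra]).
  assert (Hx0 : x0 < 0) by (unfold Rdiv in *; lra).
  assert (Htan : dU 0 * x0 <= - Rabs y - dU 0).
  { replace (- Rabs y - dU 0) with (dU 0 * (- Rabs y / dU 0 - 1)) by (field; lra).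
    apply Rmult_le_compat_l; lra. }
  pose proof (U_below_tangent x0 Hx0).
  pose proof (Rle_abs (- y)). rewrite Rabs_Ropp in *.
  destruct (Ranalysis5.IVT_interv (fun z => U z - y) x0 b) as [z [Hz1 Hz2]].
  - intros a Ha. apply continuity_pt_minus; [apply U_continuous; lra|].
    apply continuity_pt_const. intros ? ?; reflexivity.
  - lra.
  - lra.
  - lra.
  - exists z. split; lra.
Qed.

Lemma Uinv_spec b y :
  b < 1 -> y <= U b -> I (Uinv I U y) /\ U (Uinv I U y) = y /\ Uinv I U y <= b.
Proof.
  intros Hb Hy.
  assert (Hex : exists x, I x /\ U x = y).
  { destruct (U_attains b y Hb Hy) as [x [Hx Hux]]. exists x. split; auto. apply HI1. lra. }
  destruct (epsilon_spec (inhabits 0) (fun x => I x /\ U x = y) Hex) as [HIx HUx].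
  unfold Uinv. repeat split; auto.
  destruct (Rle_lt_dec (epsilon (inhabits 0) (fun x => I x /\ U x = y)) b) as [|Hlt]; auto.
  assert (I b) by (apply HI1; lra). specialize (Hinc _ _ ltac:(eassumption) HIx Hlt). lra.
Qed.

Lemma Uinv_increasing b y1 y2 :
  b < 1 -> y1 < y2 -> y2 <= U b -> Uinv I U y1 < Uinv I U y2.
Proof.
  intros Hb H12 H2.
  destruct (Uinv_spec b y1 Hb ltac:(lra)) as [I1 [E1 _]].
  destruct (Uinv_spec b y2 Hb H2) as [I2 [E2 _]].
  destruct (Rlt_le_dec (Uinv I U y1) (Uinv I U y2)) as [|Hle]; auto.
  destruct (Rle_lt_or_eq_dec _ _ Hle) as [Hl|He].
  - specialize (Hinc _ _ I2 I1 Hl). lra.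
  - rewrite He in E2. lra.
Qed.

Lemma dU_Uinv_pos b y : b < 1 -> y <= U b -> 0 < dU (Uinv I U y).
Proof. intros Hb Hy. apply HdUpos, (Uinv_spec b y Hb Hy). Qed.

Lemma dU_Uinv_decreasing b y1 y2 :
  b < 1 -> y1 < y2 -> y2 <= U b -> dU (Uinv I U y2) < dU (Uinv I U y1).
Proof.
  intros Hb H12 H2. apply dU_decreasing.
  - apply (Uinv_increasing b); auto.
  - destruct (Uinv_spec b y2 Hb H2) as [_ [_ ?]]. lra.
Qed.

Section Coefficients.

Variables (tau epsT : R) (eps : nat -> nat -> R) (o : nat -> list nat) (i : nat).
Hypothesis Htau : tau < 1.
Hypothesis Hneg : forall j, In j (o i) -> eps i j < 0.
Hypothesis Htotal : partial_eps eps i (o i) (length (o i)) = epsT.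

Lemma partial_level_le n : U tau + partial_eps eps i (o i) n <= U tau.
Proof.
  assert (partial_eps eps i (o i) n <= 0)
    by (apply partial_eps_nonpos; intros j Hj; pose proof (Hneg j Hj); lra).
  lra.
Qed.

Lemma p_coef_pos n : 0 < p_coef I U dU tau epsT eps o i n.
Proof.
  unfold p_coef, Rdiv. apply Rmult_lt_0_compat.
  - apply (dU_Uinv_pos tau); auto using partial_level_le.
  - apply Rinv_0_lt_compat. rewrite <- Htotal.
    apply (dU_Uinv_pos tau); auto using partial_level_le.
Qed.

(* Adding the negative coupling of the next predecessor lowers the level,
   hence raises U' ∘ U^{-1}. *)
Lemma p_coef_increasing n :
  (n < length (o i))%nat ->
  p_coef I U dU tau epsT eps o i n < p_coef I U dU tau epsT eps o i (S n).
Proof.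
  intros Hn. unfold p_coef, Rdiv. apply Rmult_lt_compat_r.
  - apply Rinv_0_lt_compat. rewrite <- Htotal.
    apply (dU_Uinv_pos tau); auto using partial_level_le.
  - apply (dU_Uinv_decreasing tau); auto using partial_level_le.
    rewrite partial_eps_S by exact Hn.
    pose proof (Hneg _ (nth_In (o i) 0%nat Hn)). lra.
Qed.

Lemma p_coef_last : p_coef I U dU tau epsT eps o i (length (o i)) = 1.
Proof.
  pose proof (p_coef_pos (length (o i))) as Hp.
  unfold p_coef in *. rewrite Htotal in *. field.
  intros H. rewrite H in Hp. unfold Rdiv in Hp. rewrite Rmult_0_l in Hp. lra.
Qed.

End Coefficients.

End ConcaveUtility.

Section InhibitoryCoupling.

Variables (N : nat) (Pre : nat -> nat -> Prop) (eps : nat -> nat -> R) (epsT : R).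
Variable (o : nat -> list nat).
Hypothesis HPre : forall i j, (i < N)%nat -> Pre i j -> (j < N)%nat /\ j <> i.
Hypothesis Heps : forall i j, (i < N)%nat -> (j < N)%nat -> (eps i j <> 0 <-> Pre i j).
Hypothesis Hnorm : forall i, (i < N)%nat -> sumN N (fun j => eps i j) = epsT.
Hypothesis Hinh : forall i j, (i < N)%nat -> (j < N)%nat -> eps i j <= 0.
Hypothesis Ho : is_ordering N Pre o.

Lemma ordering_in_range i j :
  (i < N)%nat -> In j (o i) -> (j < N)%nat /\ j <> i.
Proof. intros Hi Hj. apply HPre; auto. apply (Ho i Hi), Hj. Qed.

Lemma coupling_negative i j : (i < N)%nat -> In j (o i) -> eps i j < 0.
Proof.
  intros Hi Hj. destruct (ordering_in_range i j Hi Hj) as [HjN _].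
  assert (eps i j <> 0) by (apply (Heps i j Hi HjN), (Ho i Hi), Hj).
  pose proof (Hinh i j Hi HjN). lra.
Qed.

(* The couplings vanish off Pre(i), so the full partial sum is the row total. *)
Lemma coupling_total i :
  (i < N)%nat -> partial_eps eps i (o i) (length (o i)) = epsT.
Proof.
  intros Hi. destruct (Ho i Hi) as [Hnd Hin].
  unfold partial_eps. rewrite firstn_all. fold (listsum (eps i) (o i)).
  rewrite <- (sumN_indicator_list N) by (auto || (intros j Hj; apply (ordering_in_range i j Hi Hj))).
  rewrite <- (Hnorm i Hi). apply sumN_ext. intros j Hj.
  destruct (in_dec Nat.eq_dec j (o i)) as [|Hout]; auto.
  destruct (Req_dec (eps i j) 0) as [|Hne]; auto.
  exfalso. apply Hout, Hin, (Heps i j Hi Hj), Hne.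
Qed.

End InhibitoryCoupling.

(* The rows of the stability matrix are stochastic, and row i is positive
   exactly on Pre(i) ∪ {i}: row i of A(O) is the ordered row built from the
   coefficients p_{i,n}, which increase from a positive value to 1. *)
Lemma Amat_row (I : R -> Prop) (U dU d2U : R -> R)
  (HI1 : forall x, x <= 1 -> I x)
  (HdU : forall x, I x -> deriv_within I U x (dU x))
  (Hd2U : forall x, I x -> deriv_within I dU x (d2U x))
  (Hinc : forall x y, I x -> I y -> x < y -> U x < U y)
  (HdUpos : forall x, I x -> 0 < dU x)
  (Hd2Uneg : forall x, I x -> d2U x < 0) (HU0 : U 0 = 0)
  (N : nat) (tau : R) (Htau : tau < 1) (Pre : nat -> nat -> Prop)
  (HPre : forall i j, (i < N)%nat -> Pre i j -> (j < N)%nat /\ j <> i)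
  (eps : nat -> nat -> R) (epsT : R)
  (Heps : forall i j, (i < N)%nat -> (j < N)%nat -> (eps i j <> 0 <-> Pre i j))
  (Hnorm : forall i, (i < N)%nat -> sumN N (fun j => eps i j) = epsT)
  (Hinh : forall i j, (i < N)%nat -> (j < N)%nat -> eps i j <= 0)
  (o : nat -> list nat) (Ho : is_ordering N Pre o) (i : nat) (Hi : (i < N)%nat) :
  let A := Amat I U dU tau epsT eps o in
  stochastic_row N (A i) /\ (forall j, 0 < A i j <-> j = i \/ Pre i j).
Proof.
  intros A.
  assert (Hneg := fun j => coupling_negative N Pre eps o HPre Heps Hinh Ho i j Hi).
  assert (Htot := coupling_total N Pre eps epsT o HPre Heps Hnorm Ho i Hi).
  set (p := p_coef I U dU tau epsT eps o i).
  assert (Hp0 : 0 < p O) by (apply (p_coef_pos I U dU d2U); auto).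
  assert (Hincr : forall n, (n < length (o i))%nat -> p n < p (S n))
    by (apply (p_coef_increasing I U dU d2U); auto).
  assert (Hlast : p (length (o i)) = 1) by (apply (p_coef_last I U dU d2U); auto).
  assert (Hl := fun j => ordering_in_range N Pre o HPre Ho i j Hi).
  destruct (Ho i Hi) as [Hnd Hin].
  change (A i) with (ordered_row i (o i) p). split.
  - apply ordered_row_stochastic; auto.
  - intros j. rewrite ordered_row_pos by auto. rewrite Hin. tauto.
Qed.

Section WeightedSums.

Variables (N : nat) (a delta : nat -> R).
Hypothesis Ha : stochastic_row N a.

Lemma weighted_sum_nonneg :
  (forall j, (j < N)%nat -> 0 <= delta j) -> 0 <= sumN N (fun j => a j * delta j).
Proof.
  intros Hd. destruct Ha as [Hnn _].
  apply sumN_nonneg. intros j Hj. apply Rmult_le_pos; auto.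
Qed.

Lemma weighted_sum_le_max dM :
  (forall j, (j < N)%nat -> delta j <= dM) -> sumN N (fun j => a j * delta j) <= dM.
Proof.
  intros Hle. destruct Ha as [Hnn Hsum].
  rewrite <- (Rmult_1_r dM), <- Hsum, <- sumN_scal.
  apply sumN_le. intros j Hj. pose proof (Hnn j Hj). pose proof (Hle j Hj). nra.
Qed.

(* With dM the maximum of delta and dm a bound for its other values, each
   unit of weight placed off the maximum costs at least dM - dm. *)
Lemma weighted_sum_bound dM dm :
  (forall j, (j < N)%nat -> delta j <= dM) ->
  (forall j, (j < N)%nat -> delta j <> dM -> delta j <= dm) ->
  sumN N (fun j => a j * delta j)
    <= dM - (dM - dm) * sumN N (fun j => if Req_EM_T (delta j) dM then 0 else a j).
Proof.
  intros Hle Hsecond. destruct Ha as [Hnn Hsum].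
  rewrite <- (Rmult_1_r dM) at 1. rewrite <- Hsum, <- !sumN_scal, <- sumN_minus.
  apply sumN_le. intros j Hj. pose proof (Hnn j Hj).
  destruct (Req_EM_T (delta j) dM) as [->|Hne]; [lra|].
  pose proof (Hsecond j Hj Hne). nra.
Qed.

Lemma weighted_sum_lt_max dM dm :
  dm < dM ->
  (forall j, (j < N)%nat -> delta j <= dM) ->
  (forall j, (j < N)%nat -> delta j <> dM -> delta j <= dm) ->
  (exists j, (j < N)%nat /\ delta j <> dM /\ 0 < a j) ->
  sumN N (fun j => a j * delta j) < dM.
Proof.
  intros Hgap Hle Hsecond [j [Hj [Hne Hpos]]].
  pose proof (weighted_sum_bound dM dm Hle Hsecond) as Hbound.
  set (off := fun k => if Req_EM_T (delta k) dM then 0 else a k) in Hbound.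
  assert (Hoff : 0 < sumN N off).
  { apply Rlt_le_trans with (off j).
    - unfold off. destruct (Req_EM_T (delta j) dM); [tauto | exact Hpos].
    - apply sumN_ge_term; auto. intros k Hk. unfold off.
      destruct (Req_EM_T (delta k) dM); [lra | apply Ha, Hk]. }
  assert (0 < (dM - dm) * sumN N off) by (apply Rmult_lt_0_compat; lra).
  lra.
Qed.

Lemma weighted_sum_eq_max dM :
  (forall j, (j < N)%nat -> delta j <> dM -> a j = 0) ->
  sumN N (fun j => a j * delta j) = dM.
Proof.
  intros Hzero. destruct Ha as [_ Hsum].
  rewrite (sumN_ext _ _ (fun j => dM * a j)), sumN_scal, Hsum by
    (intros j Hj; destruct (Req_dec (delta j) dM) as [->|Hne];
     [ring | rewrite (Hzero j Hj Hne); ring]).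
  ring.
Qed.

End WeightedSums.

Theorem mainTheorem6
  (I : R -> Prop) (U dU d2U : R -> R)
  (HI : is_interval I) (HI1 : forall x, x <= 1 -> I x)
  (HdU : forall x, I x -> deriv_within I U x (dU x))
  (Hd2U : forall x, I x -> deriv_within I dU x (d2U x))
  (Hd2Uc : forall x, I x -> cont_within I d2U x)
  (Hinc : forall x y, I x -> I y -> x < y -> U x < U y)
  (HdUpos : forall x, I x -> 0 < dU x)
  (Hd2Uneg : forall x, I x -> d2U x < 0)
  (HU0 : U 0 = 0) (HU1 : U 1 = 1)
  (N : nat) (HN : (2 <= N)%nat)
  (tau : R) (Htau : 0 < tau < 1)
  (Pre : nat -> nat -> Prop)
  (HPre : forall i j, (i < N)%nat -> Pre i j -> (j < N)%nat /\ j <> i)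
  (HPre_ne : forall i, (i < N)%nat -> exists j, Pre i j)
  (eps : nat -> nat -> R) (epsT : R)
  (Heps : forall i j, (i < N)%nat -> (j < N)%nat -> (eps i j <> 0 <-> Pre i j))
  (Hnorm : forall i, (i < N)%nat -> sumN N (fun j => eps i j) = epsT)
  (Hinh : forall i j, (i < N)%nat -> (j < N)%nat -> eps i j <= 0)
  (HepsT : epsT < 0)
  (delta : nat -> R) (Hdelta : forall i, (i < N)%nat -> 0 <= delta i)
  (Hnc : ~ (exists c, forall i, (i < N)%nat -> delta i = c))
  (dM dm : R)
  (HdM : is_max_on (fun i => (i < N)%nat) delta dM)
  (Hdm : is_max_on (fun i => (i < N)%nat /\ delta i < dM) delta dm) :
  forall o : nat -> list nat, is_ordering N Pre o ->
  let A := Amat I U dU tau epsT eps o in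
  (forall i, (i < N)%nat ->
     Amul N A delta i
       <= dM - (dM - dm) * sumN N (fun j => if Req_EM_T (delta j) dM then 0 else A i j)
     /\ 0 <= Amul N A delta i)
  /\ ((~ exists i, (i < N)%nat /\ delta i = dM /\ (forall j, Pre i j -> delta j = dM)) ->
        forall m, is_max_on (fun i => (i < N)%nat) (Amul N A delta) m -> m < dM)
  /\ ((exists i, (i < N)%nat /\ delta i = dM /\ (forall j, Pre i j -> delta j = dM)) ->
        forall m, is_max_on (fun i => (i < N)%nat) (Amul N A delta) m -> m = dM).
Proof.
  intros o Ho A. unfold Amul.
  assert (Hrow : forall i, (i < N)%nat ->
            stochastic_row N (A i) /\ (forall j, 0 < A i j <-> j = i \/ Pre i j))
    by (intros i Hi; apply (Amat_row I U dU d2U); auto; lra).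
  destruct HdM as [_ HdMle].
  destruct Hdm as [[im [[Him Himlt] <-]] Hdmle].
  assert (Hsecond : forall j, (j < N)%nat -> delta j <> dM -> delta j <= delta im).
  { intros j Hj Hne. apply Hdmle. pose proof (HdMle j Hj). split; [exact Hj | lra]. }
  split; [|split].
  - intros i Hi. destruct (Hrow i Hi) as [Hst _].
    split; [apply weighted_sum_bound | apply weighted_sum_nonneg]; auto.
  - (* some row weight falls outside M, otherwise Pre(i0) ∪ {i0} ⊆ M *)
    intros Hno m [[i0 [Hi0 <-]] _]. destruct (Hrow i0 Hi0) as [Hst Hsupp].
    apply weighted_sum_lt_max with (delta im); auto.
    apply NNPP. intros Hall. apply Hno. exists i0.
    assert (HinM : forall j, (j < N)%nat -> j = i0 \/ Pre i0 j -> delta j = dM).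
    { intros j Hj Hsj. apply NNPP. intros Hne. apply Hall. exists j.
      repeat split; auto. apply Hsupp, Hsj. }
    repeat split; auto. intros j Hj. apply HinM; auto. apply (HPre i0 j Hi0 Hj).
  - (* the row of i is supported in M, so its average is dM *)
    intros [i [Hi [Hdi Hpre]]] m [[i0 [Hi0 <-]] Hmax].
    destruct (Hrow i Hi) as [Hst Hsupp].
    apply Rle_antisym; [apply weighted_sum_le_max; auto; apply Hrow, Hi0|].
    rewrite <- (weighted_sum_eq_max N (A i) delta Hst dM) at 1; [apply Hmax, Hi|].
    intros j Hj Hne. destruct Hst as [Hnn _].
    destruct (Rle_lt_or_eq_dec _ _ (Hnn j Hj)) as [Hpos|]; [|auto].
    exfalso. apply Hne. destruct (proj1 (Hsupp j) Hpos) as [->|]; auto.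
Qed.
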